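(* Consider the binary state-dependent channel with $\mathcal{X}=\mathcal{S}=\mathcal{Y}=\mathcal{Z}=\{0,1\}$, $P_S=\mathrm{Bernoulli}(p)$ with $p\in(0,\tfrac12)$, channel law $Y=Z=X\oplus S$ (modulo-2 addition), no-input symbol $x_0=0$, secret-key rate $R_K>0$, and no binding cost constraint (e.g. $b\equiv 0$). Then the covert capacities with causal and with noncausal CSI at the transmitter are $$C_{\mathrm{c}}=C_{\mathrm{nc}}=H_{\mathrm b}(p)=p\log\frac1p+(1-p)\log\frac1{1-p}.$$
   Context: A state-dependent discrete memoryless channel consists of finite alphabets $\mathcal{X},\mathcal{S},\mathcal{Y},\mathcal{Z}$, state PMF $P_S$ and channel law $P_{Y,Z|S,X}$; states $S^n$ are IID $\sim P_S$, known to the transmitter (causally: $X_i$ depends on $(M,K,S^i)$; noncausally: $X^n$ depends on $(M,K,S^n)$; in both cases possibly also on private randomness) but not to the receiver or warden. $Q_0(z)=\sum_s P_S(s)P_{Z|S,X}(z|s,x_0)$. Key $K$ uniform on $[1:2^{nR_K}]$ and message $M$ uniform on $[1:2^{nR}]$ are independent of each other and of $S^n$; the decoder maps $(Y^n,K)$ to $\hat M$. A rate $R$ is achievable if there are codes with $\limsup_n \mathrm{E}[\frac1n\sum_i b(X_i)]\le B$, $P(\hat M\neq M)\to0$ and $D(\widehat{P}_{Z^n}\|Q_0^{\times n})\to0$, where $\widehat{P}_{Z^n}$ is the warden's output distribution induced by the code; the covert capacity $C_{\mathrm{c}}$ (causal) or $C_{\mathrm{nc}}$ (noncausal) is the supremum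 of achievable rates. *)

From Stdlib Require Import Reals List Bool.
Import ListNotations.
Open Scope R_scope.

Definition sumL {A : Type} (l : list A) (f : A -> R) : R :=
  fold_right (fun a acc => f a + acc) 0 l.

Fixpoint allseq (n : nat) : list (list bool) :=
  match n with
  | O => [[]]
  | S n' => flat_map (fun t => [false :: t; true :: t]) (allseq n')
  end.

Definition listb_eqb (a b : list bool) : bool :=
  if list_eq_dec bool_dec a b then true else false.

Definition log2 (x : R) : R := ln x / ln 2.

Definition Hb (p : R) : R := p * log2 (1 / p) + (1 - p) * log2 (1 / (1 - p)).

(* IID Bernoulli(p) law of a state sequence (1 = true) *)
Definition PSn (p : R) (s : list bool) : R :=
  fold_right (fun (b : bool) (acc : R) => (if b then p else 1 - p) * acc) 1 s.

(* channel Y = Z = X xor S, componentwise *)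
Definition xorseq (x s : list bool) : list bool := map (fun ab : bool * bool => xorb (fst ab) (snd ab)) (combine x s).

(* A length-n code: number of messages cM (message uniform on 0..cM-1),
   number of keys cK (key uniform on 0..cK-1), a stochastic encoder
   cenc m k s x = P(X^n = x | M = m, K = k, S^n = s) (private randomness is
   absorbed into this kernel), and a decoder cdec y k = estimate of m. *)
Record Code := mkCode {
  cM : nat;
  cK : nat;
  cenc : nat -> nat -> list bool -> list bool -> R;
  cdec : list bool -> nat -> nat }.

Definition enc_kernel (n : nat) (c : Code) : Prop :=
  (forall m k s x, (0 <= cenc c m k s x)) /\
  (forall m k s, (m < cM c)%nat -> (k < cK c)%nat -> In s (allseq n) ->
     sumL (allseq n) (fun x => cenc c m k s x) = 1).

(* causality: the law of X^i given (m,k,S^n) depends only on S^i, for every i;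
   equivalently X_i is generated from (M,K,S^i) and private randomness. *)
Definition causal (n : nat) (c : Code) : Prop :=
  forall m k s s' (i : nat) (xp : list bool),
    In s (allseq n) -> In s' (allseq n) -> firstn i s = firstn i s' ->
    sumL (allseq n) (fun x => if listb_eqb (firstn i x) xp then cenc c m k s x else 0)
    = sumL (allseq n) (fun x => if listb_eqb (firstn i x) xp then cenc c m k s' x else 0).

Definition code_sizes (n : nat) (R0 RK : R) (c : Code) : Prop :=
  (1 <= cK c)%nat /\ INR (cK c) <= Rpower 2 (INR n * RK) /\
  (1 <= cM c)%nat /\ Rpower 2 (INR n * R0) <= INR (cM c).

Definition avgMK (c : Code) (f : nat -> nat -> R) : R :=
  / (INR (cM c) * INR (cK c)) *
  sumL (seq 0 (cM c)) (fun m => sumL (seq 0 (cK c)) (fun k => f m k)).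

Definition Perr (n : nat) (p : R) (c : Code) : R :=
  avgMK c (fun m k => sumL (allseq n) (fun s => PSn p s *
     sumL (allseq n) (fun x => cenc c m k s x *
        (if Nat.eqb (cdec c (xorseq x s) k) m then 0 else 1)))).

Definition PZhat (n : nat) (p : R) (c : Code) (z : list bool) : R :=
  avgMK c (fun m k => sumL (allseq n) (fun s => PSn p s *
     sumL (allseq n) (fun x => cenc c m k s x *
        (if listb_eqb (xorseq x s) z then 1 else 0)))).

(* Q0(z) = sum_s P_S(s) P_{Z|S,X}(z|s,0) = P_S(z); Q0^{x n} *)
Definition Q0n (p : R) (z : list bool) : R := PSn p z.

Definition KLn (n : nat) (p : R) (c : Code) : R :=
  sumL (allseq n) (fun z =>
    if Rlt_le_dec 0 (PZhat n p c z)
    then PZhat n p c z * log2 (PZhat n p c z / Q0n p z) else 0).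

(* achievability; causal = true for causal CSI, false for noncausal CSI.
   The cost constraint is vacuous (b = 0) and hence omitted. *)
Definition achievable (is_causal : bool) (p RK R0 : R) : Prop :=
  0 <= R0 /\
  exists codes : nat -> Code,
    (forall n, enc_kernel n (codes n) /\ code_sizes n R0 RK (codes n) /\
               (if is_causal then causal n (codes n) else True)) /\
    Un_cv (fun n => Perr n p (codes n)) 0 /\
    Un_cv (fun n => KLn n p (codes n)) 0.

(** Achievability: the sequences of probability at most [2^(-n R1)], [R0 < R1 < Hb p],
    carry almost all of the mass of [P_S] (weak AEP) and can be split greedily into
    [2^(n R0)] buckets of nearly equal mass.  The encoder draws [y] from [P_S] conditioned on
    the bucket of the message and sends [x = y xor s]; then [Y = Z = y], the receiver decodes
    without error, and the warden sees a mixture whose density is at most [1 + O(1/n)] times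
    [P_S], so the divergence vanishes.  The encoder only ever needs [s] causally.

    Converse: outputs of probability at least [2^(-n (Hb p + delta))] number at most
    [2^(n (Hb p + delta))], so with [2^(n R0)] messages, [R0 > Hb p + delta], they decode only a
    vanishing fraction of the messages.  The remaining outputs are rare under [P_S] by the AEP,
    and Gibbs' inequality with a small divergence forces the warden's (= receiver's) output
    distribution to give them small mass too.  Neither direction uses the key or [p < 1/2]. *)

From Stdlib Require Import Reals Lra Lia List Bool ZArith IndefiniteDescription.
Import ListNotations.
Open Scope R_scope.

Lemma ln2_pos : 0 < ln 2.
Proof. rewrite <- ln_1. apply ln_increasing; lra. Qed.

Lemma ln_le_sub_1 x : 0 < x -> ln x <= x - 1.
Proof. intros Hx. pose proof (exp_ineq1_le (ln x)). rewrite exp_ln in *; lra. Qed.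

Lemma ln_le x y : 0 < x -> x <= y -> ln x <= ln y.
Proof. intros Hx [Hxy|<-]; [left; now apply ln_increasing | lra]. Qed.

Lemma ln_div x y : 0 < x -> 0 < y -> ln (x / y) = ln x - ln y.
Proof. intros. unfold Rdiv. rewrite ln_mult, ln_Rinv; [ring | | | apply Rinv_0_lt_compat]; auto. Qed.

Lemma log2_le x y : 0 < x -> x <= y -> log2 x <= log2 y.
Proof.
  intros. unfold log2, Rdiv. apply Rmult_le_compat_r; [left; apply Rinv_0_lt_compat, ln2_pos|].
  now apply ln_le.
Qed.

Lemma log2_increasing x y : 0 < x -> x < y -> log2 x < log2 y.
Proof.
  intros. unfold log2, Rdiv. apply Rmult_lt_compat_r; [apply Rinv_0_lt_compat, ln2_pos|].
  now apply ln_increasing.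
Qed.

Lemma exp_neg_le_inv u : 0 < u -> exp (- u) <= / u.
Proof. intros Hu. pose proof (exp_ineq1_le u). rewrite exp_Ropp. apply Rinv_le_contravar; lra. Qed.

Lemma nat_ceil x : 0 <= x -> exists M : nat, x <= INR M <= x + 1.
Proof.
  intros Hx. destruct (archimed x) as [H1 H2]. assert (0 < up x)%Z by (apply lt_0_IZR; lra).
  exists (Z.to_nat (up x)). rewrite INR_IZR_INZ, Z2Nat.id by lia. lra.
Qed.

Lemma Rpower2_pos x : 0 < Rpower 2 x.
Proof. apply exp_pos. Qed.

Lemma Rpower2_ge_1 x : 0 <= x -> 1 <= Rpower 2 x.
Proof.
  intros Hx. unfold Rpower. pose proof (exp_ineq1_le (x * ln 2)). pose proof ln2_pos. nra.
Qed.

Lemma log2_Rpower2 x : log2 (Rpower 2 x) = x.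
Proof. unfold log2. rewrite ln_Rpower. field. apply Rgt_not_eq, ln2_pos. Qed.

Lemma Rpower2_neg_le_inv u : 0 < u -> Rpower 2 (- u) <= / (u * ln 2).
Proof.
  intros Hu. unfold Rpower. rewrite Ropp_mult_distr_l_reverse.
  apply exp_neg_le_inv, Rmult_lt_0_compat; [exact Hu | apply ln2_pos].
Qed.

Lemma log2_inv_1_sub_le e : 0 <= e <= 1 / 2 -> log2 (/ (1 - e)) <= 2 * e / ln 2.
Proof.
  intros He. pose proof ln2_pos. unfold log2, Rdiv.
  apply Rmult_le_compat_r; [left; now apply Rinv_0_lt_compat|].
  eapply Rle_trans; [apply ln_le_sub_1, Rinv_0_lt_compat; lra|].
  replace (/ (1 - e) - 1) with (e / (1 - e)) by (field; lra).
  apply Rmult_le_reg_r with (1 - e); [lra|]. unfold Rdiv. rewrite Rmult_assoc, Rinv_l; nra.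
Qed.

Lemma eventually_inv_INR_lt C eps : 0 < eps ->
  exists N, forall n, (N <= n)%nat -> 0 < INR n /\ C / INR n < eps.
Proof.
  intros Heps. destruct (nat_ceil (Rabs C / eps)) as [N [HN _]].
  { unfold Rdiv; apply Rmult_le_pos; [apply Rabs_pos | left; now apply Rinv_0_lt_compat]. }
  exists (S N). intros n Hn. assert (HNn : INR (S N) <= INR n) by now apply le_INR.
  rewrite S_INR in HNn. pose proof (pos_INR N). split; [lra|].
  apply Rmult_lt_reg_r with (INR n); [lra|]. unfold Rdiv. rewrite Rmult_assoc, Rinv_l by lra.
  apply Rmult_le_compat_r with (r := eps) in HN; [|lra].
  unfold Rdiv in HN. rewrite Rmult_assoc, Rinv_l, Rmult_1_r in HN by lra.
  pose proof (Rle_abs C). nra.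
Qed.

Lemma eventually_ln_div_gt K B : 0 < K -> 0 <= B ->
  exists N, forall n, (N <= n)%nat -> K < INR n /\ B < ln (INR n / K).
Proof.
  intros HK HB. destruct (eventually_inv_INR_lt K (exp (- B))) as [N HN]; [apply exp_pos|].
  exists N. intros n Hn. destruct (HN n Hn) as [Hn' HKn].
  assert (Hratio : exp B < INR n / K).
  { replace (INR n / K) with (/ (K / INR n)) by (field; lra).
    rewrite <- (Ropp_involutive B), exp_Ropp. apply Rinv_lt_contravar; [|exact HKn].
    apply Rmult_lt_0_compat; [apply Rdiv_lt_0_compat; lra | apply exp_pos]. }
  assert (1 <= exp B) by (rewrite <- exp_0; destruct HB as [HB|<-]; [left; now apply exp_increasing | lra]).
  split.
  - apply Rmult_lt_reg_r with (/ K); [now apply Rinv_0_lt_compat|]. rewrite Rinv_r; lra.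
  - rewrite <- (ln_exp B) at 1. apply ln_increasing; [apply exp_pos | exact Hratio].
Qed.

Lemma Rpower2_le x y : x <= y -> Rpower 2 x <= Rpower 2 y.
Proof.
  intros Hxy. unfold Rpower. destruct (Req_dec x y) as [->|]; [lra|].
  left. apply exp_increasing, Rmult_lt_compat_r; [apply ln2_pos | lra].
Qed.

Lemma is_lub_of_interval (S : R -> Prop) h : 0 < h ->
  (forall r, S r -> r <= h) -> (forall r, 0 <= r < h -> S r) -> is_lub S h.
Proof.
  intros Hh Hub Hint. split; [exact Hub|]. intros b Hb.
  destruct (Rle_lt_dec h b) as [|Hbh]; [assumption|exfalso].
  set (r := (Rmax b 0 + h) / 2).
  assert (Rmax b 0 < h) by (apply Rmax_lub_lt; lra). pose proof (Rmax_r b 0).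
  assert (Hr : 0 <= r < h) by (unfold r; lra).
  specialize (Hb r (Hint r Hr)). pose proof (Rmax_l b 0). unfold r in Hb. lra.
Qed.

Lemma sumL_nil {A} (f : A -> R) : sumL [] f = 0.
Proof. reflexivity. Qed.

Lemma sumL_cons {A} (a : A) l f : sumL (a :: l) f = f a + sumL l f.
Proof. reflexivity. Qed.

Lemma sumL_app {A} (l1 l2 : list A) f : sumL (l1 ++ l2) f = sumL l1 f + sumL l2 f.
Proof. induction l1 as [|a l1 IH]; cbn [app]; rewrite ?sumL_nil, ?sumL_cons, ?IH; ring. Qed.

Lemma sumL_plus {A} (l : list A) f g : sumL l (fun x => f x + g x) = sumL l f + sumL l g.
Proof. induction l as [|a l IH]; rewrite ?sumL_nil, ?sumL_cons, ?IH; ring. Qed.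

Lemma sumL_minus {A} (l : list A) f g : sumL l (fun x => f x - g x) = sumL l f - sumL l g.
Proof. induction l as [|a l IH]; rewrite ?sumL_nil, ?sumL_cons, ?IH; ring. Qed.

Lemma sumL_scal {A} (l : list A) c f : sumL l (fun x => c * f x) = c * sumL l f.
Proof. induction l as [|a l IH]; rewrite ?sumL_nil, ?sumL_cons, ?IH; ring. Qed.

Lemma sumL_scalr {A} (l : list A) c f : sumL l (fun x => f x * c) = sumL l f * c.
Proof. induction l as [|a l IH]; rewrite ?sumL_nil, ?sumL_cons, ?IH; ring. Qed.

Lemma sumL_ext_in {A} (l : list A) f g :
  (forall x, In x l -> f x = g x) -> sumL l f = sumL l g.
Proof.
  induction l as [|a l IH]; intros H; [reflexivity|]. rewrite !sumL_cons.
  rewrite H by now left. rewrite IH by (intros; apply H; now right). reflexivity.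
Qed.

Lemma sumL_ext {A} (l : list A) f g : (forall x, f x = g x) -> sumL l f = sumL l g.
Proof. intros; apply sumL_ext_in; auto. Qed.

Lemma sumL_le {A} (l : list A) f g :
  (forall x, In x l -> f x <= g x) -> sumL l f <= sumL l g.
Proof.
  induction l as [|a l IH]; intros H; [cbn; lra|]. rewrite !sumL_cons.
  apply Rplus_le_compat; [apply H; now left | apply IH; intros; apply H; now right].
Qed.

Lemma sumL_zero {A} (l : list A) f : (forall x, In x l -> f x = 0) -> sumL l f = 0.
Proof.
  intros H. transitivity (sumL l (fun _ => 0)); [now apply sumL_ext_in|].
  clear H; induction l; [reflexivity|]. rewrite sumL_cons, IHl; ring.
Qed.

Lemma sumL_nonneg {A} (l : list A) f : (forall x, In x l -> 0 <= f x) -> 0 <= sumL l f.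
Proof. intros H. rewrite <- (sumL_zero l (fun _ => 0)) by auto. now apply sumL_le. Qed.

Lemma sumL_swap {A B} (l1 : list A) (l2 : list B) (f : A -> B -> R) :
  sumL l1 (fun a => sumL l2 (f a)) = sumL l2 (fun b => sumL l1 (fun a => f a b)).
Proof.
  induction l1 as [|a l1 IH].
  - symmetry; now apply sumL_zero.
  - rewrite sumL_cons, IH, <- sumL_plus. reflexivity.
Qed.

Lemma sumL_const {A} (l : list A) c : sumL l (fun _ => c) = INR (length l) * c.
Proof.
  induction l as [|a l IH]; [cbn; ring|]. rewrite sumL_cons, IH; cbn [length]; rewrite S_INR; ring.
Qed.

Lemma sumL_flat_map {A B} (g : A -> list B) l f :
  sumL (flat_map g l) f = sumL l (fun a => sumL (g a) f).
Proof. induction l; [reflexivity|]. cbn [flat_map]. now rewrite sumL_app, IHl. Qed.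

Lemma sumL_term_le {A} (l : list A) f x :
  (forall y, In y l -> 0 <= f y) -> In x l -> f x <= sumL l f.
Proof.
  induction l as [|a l IH]; intros H Hx; [destruct Hx|]. rewrite sumL_cons.
  destruct Hx as [<-|Hx].
  - enough (0 <= sumL l f) by lra. apply sumL_nonneg; intros; apply H; now right.
  - enough (0 <= f a /\ f x <= sumL l f) by lra.
    split; [apply H; now left | apply IH; auto; intros; apply H; now right].
Qed.

Lemma sumL_seq_indicator_le d c len s : 0 <= c ->
  sumL (seq s len) (fun m => if Nat.eqb d m then c else 0) <= c.
Proof.
  intros Hc. revert s; induction len as [|len IH]; intros s; cbn [seq]; [cbn; lra|].
  rewrite sumL_cons. destruct (Nat.eqb_spec d s) as [->|]; [|rewrite Rplus_0_l; apply IH].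
  rewrite sumL_zero; [lra|]. intros m Hm%in_seq. destruct (Nat.eqb_spec s m); [lia|reflexivity].
Qed.

Lemma sumL_allseq_S n f :
  sumL (allseq (S n)) f = sumL (allseq n) (fun t => f (false :: t) + f (true :: t)).
Proof.
  cbn [allseq]. rewrite sumL_flat_map. apply sumL_ext; intros t. cbn. ring.
Qed.

Lemma In_allseq n y : In y (allseq n) <-> length y = n.
Proof.
  revert y; induction n as [|n IH]; intros y; cbn [allseq].
  - split; [intros [<-|[]]; reflexivity | destruct y; [now left | discriminate]].
  - rewrite in_flat_map. split.
    + intros [t [Ht%IH [<-|[<-|[]]]]]; cbn; congruence.
    + destruct y as [|b t]; [discriminate|]. intros [= Ht].
      exists t; split; [now apply IH|]. destruct b; cbn; auto.
Qed.

Lemma NoDup_allseq n : NoDup (allseq n).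
Proof.
  induction n as [|n IH]; cbn [allseq]; [repeat constructor; cbn; tauto|].
  induction IH as [|t l Ht _ IHl]; cbn; [constructor|].
  assert (Hnot : forall b, ~ In (b :: t) (flat_map (fun t0 => [false :: t0; true :: t0]) l)).
  { intros b [t' [Ht' H]]%in_flat_map. destruct H as [[= _ ->]|[[= _ ->]|[]]]; contradiction. }
  constructor; [cbn; intros [H|H]; [discriminate | now apply (Hnot false)]|].
  constructor; [apply Hnot | exact IHl].
Qed.

Lemma listb_eqb_spec a b : listb_eqb a b = true <-> a = b.
Proof. unfold listb_eqb; destruct (list_eq_dec bool_dec a b); split; congruence. Qed.

Lemma listb_eqb_refl a : listb_eqb a a = true.
Proof. now apply listb_eqb_spec. Qed.

Lemma listb_eqb_sym a b : listb_eqb a b = listb_eqb b a.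
Proof.
  destruct (listb_eqb b a) eqn:E; [apply listb_eqb_spec in E; subst; apply listb_eqb_refl|].
  destruct (listb_eqb a b) eqn:E'; [|reflexivity].
  apply listb_eqb_spec in E'; subst; now rewrite listb_eqb_refl in E.
Qed.

Lemma sumL_indicator l z (g : list bool -> R) : NoDup l -> In z l ->
  sumL l (fun y => if listb_eqb y z then g y else 0) = g z.
Proof.
  induction 1 as [|a l Ha Hl IH]; intros Hz; [destruct Hz|]. rewrite sumL_cons.
  destruct Hz as [<-|Hz].
  - rewrite listb_eqb_refl, sumL_zero; [ring|]. intros y Hy.
    destruct (listb_eqb y a) eqn:E; [apply listb_eqb_spec in E; congruence | reflexivity].
  - destruct (listb_eqb a z) eqn:E; [apply listb_eqb_spec in E; congruence|].
    rewrite IH; auto; ring.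
Qed.

Lemma xorseq_cons b t c s : xorseq (b :: t) (c :: s) = xorb b c :: xorseq t s.
Proof. reflexivity. Qed.

Lemma length_xorseq x s : length (xorseq x s) = Nat.min (length x) (length s).
Proof. unfold xorseq. now rewrite length_map, length_combine. Qed.

Lemma xorseq_allseq n x s : In x (allseq n) -> In s (allseq n) -> In (xorseq x s) (allseq n).
Proof. rewrite !In_allseq, length_xorseq. intros -> ->. apply Nat.min_id. Qed.

Lemma firstn_xorseq i x s : firstn i (xorseq x s) = xorseq (firstn i x) (firstn i s).
Proof.
  revert x s; induction i as [|i IH]; intros [|b x] [|c s]; try reflexivity.
  cbn [firstn]. now rewrite !xorseq_cons, IH.
Qed.

Lemma xorseqK x s : length x = length s -> xorseq (xorseq x s) s = x.
Proof.
  revert s; induction x as [|b x IH]; intros [|c s] H; try discriminate; [reflexivity|].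
  rewrite !xorseq_cons, IH by (cbn in H; lia). now destruct b, c.
Qed.

(** Translation by a fixed [s] permutes the binary sequences of length [n]. *)
Lemma sumL_allseq_xorseq n s f : length s = n ->
  sumL (allseq n) (fun x => f (xorseq x s)) = sumL (allseq n) f.
Proof.
  revert s f; induction n as [|n IH]; intros [|c s] f Hs; try discriminate; [reflexivity|].
  rewrite !sumL_allseq_S.
  set (g u := f (xorb false c :: u) + f (xorb true c :: u)).
  transitivity (sumL (allseq n) g); [exact (IH s g ltac:(cbn in Hs; lia))|].
  apply sumL_ext; intros t; unfold g; destruct c; cbn; ring.
Qed.

(** * The Bernoulli product law and the AEP *)

Fixpoint weight (y : list bool) : nat :=
  match y with [] => O | b :: t => ((if b then 1 else 0) + weight t)%nat end.

Section Bernoulli.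
Variable p : R.
Hypothesis Hp : 0 < p < 1.

Lemma PSn_cons b t : PSn p (b :: t) = (if b then p else 1 - p) * PSn p t.
Proof. reflexivity. Qed.

Lemma PSn_pos y : 0 < PSn p y.
Proof. induction y as [|b y IH]; cbn; [lra|]. apply Rmult_lt_0_compat; auto. destruct b; lra. Qed.

Lemma PSn_sum n : sumL (allseq n) (PSn p) = 1.
Proof.
  induction n as [|n IH]; [cbn; ring|]. rewrite sumL_allseq_S, <- IH.
  apply sumL_ext; intros t. rewrite !PSn_cons. ring.
Qed.

Lemma PSn_weight_mean n : sumL (allseq n) (fun t => PSn p t * INR (weight t)) = INR n * p.
Proof.
  induction n as [|n IH]; [cbn; ring|]. rewrite sumL_allseq_S.
  rewrite (sumL_ext _ _ (fun t => PSn p t * INR (weight t) + p * PSn p t))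
    by (intros; rewrite !PSn_cons; cbn [weight Nat.add]; rewrite S_INR; ring).
  rewrite sumL_plus, sumL_scal, IH, PSn_sum, S_INR; ring.
Qed.

Lemma PSn_weight_second_moment n :
  sumL (allseq n) (fun t => PSn p t * INR (weight t) ^ 2) = INR n * p + INR n * (INR n - 1) * p ^ 2.
Proof.
  induction n as [|n IH]; [cbn; ring|]. rewrite sumL_allseq_S.
  rewrite (sumL_ext _ _ (fun t => PSn p t * INR (weight t) ^ 2
             + (2 * p) * (PSn p t * INR (weight t)) + p * PSn p t))
    by (intros; rewrite !PSn_cons; cbn [weight Nat.add]; rewrite S_INR; ring).
  rewrite !sumL_plus, !sumL_scal, IH, PSn_weight_mean, PSn_sum, S_INR; ring.
Qed.

Lemma PSn_weight_variance n :
  sumL (allseq n) (fun t => PSn p t * (INR (weight t) - INR n * p) ^ 2) = INR n * p * (1 - p).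
Proof.
  rewrite (sumL_ext _ _ (fun t => PSn p t * INR (weight t) ^ 2
             + (-2 * INR n * p) * (PSn p t * INR (weight t)) + (INR n * p) ^ 2 * PSn p t))
    by (intros; ring).
  rewrite !sumL_plus, !sumL_scal, PSn_weight_second_moment, PSn_weight_mean, PSn_sum; ring.
Qed.

Lemma PSn_weight_deviation_le n eta (B : list bool -> bool) : (0 < n)%nat -> 0 < eta ->
  (forall t, In t (allseq n) -> B t = true -> INR n * eta < Rabs (INR (weight t) - INR n * p)) ->
  sumL (allseq n) (fun t => if B t then PSn p t else 0) <= p * (1 - p) / (INR n * eta ^ 2).
Proof.
  intros Hn%lt_0_INR Heta HB. set (r := INR n * eta).
  assert (Hr : 0 < r) by (apply Rmult_lt_0_compat; lra).
  apply Rle_trans with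
    (sumL (allseq n) (fun t => / r ^ 2 * (PSn p t * (INR (weight t) - INR n * p) ^ 2))).
  - apply sumL_le; intros t Ht. pose proof (PSn_pos t). pose proof (pow_lt r 2 Hr).
    destruct (B t) eqn:E.
    + assert (r ^ 2 <= (INR (weight t) - INR n * p) ^ 2).
      { rewrite <- (pow2_abs (INR (weight t) - INR n * p)). apply pow_incr. specialize (HB t Ht E). fold r in HB. lra. }
      apply Rmult_le_reg_l with (r ^ 2); auto.
      rewrite <- Rmult_assoc, Rinv_r, Rmult_1_l by lra. nra.
    + apply Rmult_le_pos; [left; now apply Rinv_0_lt_compat|].
      apply Rmult_le_pos; [lra | apply pow2_ge_0].
  - rewrite sumL_scal, PSn_weight_variance. right. unfold r. field. lra.
Qed.

Lemma ln_PSn y :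
  ln (PSn p y) = INR (weight y) * ln p + (INR (length y) - INR (weight y)) * ln (1 - p).
Proof.
  induction y as [|b y IH]; cbn [PSn fold_right weight length]; [rewrite ln_1; cbn; ring|].
  fold (PSn p y). rewrite ln_mult, IH by (destruct b; lra || apply PSn_pos).
  rewrite S_INR. destruct b; cbn [Nat.add]; rewrite ?S_INR; ring.
Qed.

Lemma log2_PSn_entropy n y : In y (allseq n) ->
  log2 (PSn p y) + INR n * Hb p
  = - (INR (weight y) - INR n * p) * ((ln (1 - p) - ln p) / ln 2).
Proof.
  intros Hy%In_allseq. unfold Hb, log2. rewrite ln_PSn, Hy.
  unfold Rdiv. rewrite !Rmult_1_l, !ln_Rinv by lra. pose proof ln2_pos. field. lra.
Qed.

Definition aep_const (delta : R) : R := p * (1 - p) * ((ln (1 - p) - ln p) / (delta * ln 2)) ^ 2.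

Lemma aep_const_nonneg delta : 0 <= aep_const delta.
Proof. unfold aep_const. apply Rmult_le_pos; [nra | apply pow2_ge_0]. Qed.

(** Chebyshev's inequality for the information density (weak AEP). *)
Lemma PSn_atypical_le n delta (B : list bool -> bool) : (0 < n)%nat -> 0 < delta ->
  (forall t, In t (allseq n) -> B t = true ->
     INR n * delta < Rabs (log2 (PSn p t) + INR n * Hb p)) ->
  sumL (allseq n) (fun t => if B t then PSn p t else 0) <= aep_const delta / INR n.
Proof.
  intros Hn Hd HB. pose proof ln2_pos. pose proof (lt_0_INR _ Hn) as Hn'.
  set (k := (ln (1 - p) - ln p) / ln 2).
  destruct (Req_dec k 0) as [Hk|Hk].
  - rewrite sumL_zero.
    + unfold Rdiv. apply Rmult_le_pos; [apply aep_const_nonneg | left; now apply Rinv_0_lt_compat].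
    + intros t Ht. destruct (B t) eqn:E; [|reflexivity]. exfalso.
      specialize (HB t Ht E). rewrite log2_PSn_entropy in HB by exact Ht.
      fold k in HB. rewrite Hk, Rmult_0_r, Rabs_R0 in HB. nra.
  - assert (Hka : 0 < Rabs k) by now apply Rabs_pos_lt.
    replace (aep_const delta / INR n) with (p * (1 - p) / (INR n * (delta / Rabs k) ^ 2)).
    + apply PSn_weight_deviation_le; auto; [now apply Rdiv_lt_0_compat|].
      intros t Ht Et. specialize (HB t Ht Et).
      rewrite log2_PSn_entropy, Rabs_mult, Rabs_Ropp in HB by exact Ht. fold k in HB.
      apply Rmult_lt_reg_r with (Rabs k); auto.
      replace (INR n * (delta / Rabs k) * Rabs k) with (INR n * delta) by (field; lra). exact HB.
    + replace (aep_const delta) with (p * (1 - p) * (k / delta) ^ 2)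
        by (unfold aep_const, k; f_equal; f_equal; field; lra).
      replace ((delta / Rabs k) ^ 2) with (delta ^ 2 / k ^ 2)
        by (rewrite <- (pow2_abs k); field; lra).
      field. lra.
Qed.

Lemma count_PSn_ge_le n q : 0 < q ->
  sumL (allseq n) (fun y => if Rle_dec q (PSn p y) then 1 else 0) <= / q.
Proof.
  intros Hq. apply Rle_trans with (sumL (allseq n) (fun y => / q * PSn p y)).
  - apply sumL_le; intros y _. pose proof (PSn_pos y). destruct (Rle_dec q (PSn p y)).
    + apply Rmult_le_reg_l with q; auto. rewrite <- Rmult_assoc, Rinv_r; lra.
    + apply Rmult_le_pos; [left; now apply Rinv_0_lt_compat | lra].
  - rewrite sumL_scal, PSn_sum. lra.
Qed.

End Bernoulli.

Lemma Hb_pos p : 0 < p < 1 -> 0 < Hb p.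
Proof.
  intros Hp. unfold Hb, log2, Rdiv. rewrite !Rmult_1_l, !ln_Rinv by lra.
  assert (ln p < 0) by (rewrite <- ln_1; apply ln_increasing; lra).
  assert (ln (1 - p) < 0) by (rewrite <- ln_1; apply ln_increasing; lra).
  pose proof (Rinv_0_lt_compat _ ln2_pos).
  assert (0 < p * (- ln p * / ln 2)) by (apply Rmult_lt_0_compat; [lra|]; apply Rmult_lt_0_compat; lra).
  assert (0 < (1 - p) * (- ln (1 - p) * / ln 2)) by (apply Rmult_lt_0_compat; [lra|]; apply Rmult_lt_0_compat; lra).
  lra.
Qed.

Lemma avgMK_ext_in c f g :
  (forall m k, (m < cM c)%nat -> (k < cK c)%nat -> f m k = g m k) -> avgMK c f = avgMK c g.
Proof.
  intros H. unfold avgMK. f_equal.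
  apply sumL_ext_in; intros m Hm%in_seq; apply sumL_ext_in; intros k Hk%in_seq.
  apply H; lia.
Qed.

Lemma avgMK_le c f g : (1 <= cM c)%nat -> (1 <= cK c)%nat ->
  (forall m k, (m < cM c)%nat -> (k < cK c)%nat -> f m k <= g m k) -> avgMK c f <= avgMK c g.
Proof.
  intros HM HK H. unfold avgMK. apply Rmult_le_compat_l.
  - left; apply Rinv_0_lt_compat, Rmult_lt_0_compat; apply lt_0_INR; lia.
  - apply sumL_le; intros m Hm%in_seq; apply sumL_le; intros k Hk%in_seq. apply H; lia.
Qed.

Lemma avgMK_const c r : (1 <= cM c)%nat -> (1 <= cK c)%nat -> avgMK c (fun _ _ => r) = r.
Proof.
  intros HM HK. unfold avgMK.
  rewrite (sumL_ext _ _ (fun _ => INR (cK c) * r)) by (intros; now rewrite sumL_const, length_seq).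
  rewrite sumL_const, length_seq. field. split; apply not_0_INR; lia.
Qed.

Lemma avgMK_plus c f g : avgMK c (fun m k => f m k + g m k) = avgMK c f + avgMK c g.
Proof.
  unfold avgMK. rewrite <- Rmult_plus_distr_l, <- sumL_plus. f_equal.
  apply sumL_ext; intros; apply sumL_plus.
Qed.

Lemma avgMK_minus c f g : avgMK c (fun m k => f m k - g m k) = avgMK c f - avgMK c g.
Proof.
  unfold avgMK. rewrite <- Rmult_minus_distr_l, <- sumL_minus. f_equal.
  apply sumL_ext; intros; apply sumL_minus.
Qed.

Lemma avgMK_scal c r f : r * avgMK c f = avgMK c (fun m k => r * f m k).
Proof.
  unfold avgMK. rewrite Rmult_comm, Rmult_assoc, <- sumL_scalr. f_equal.
  apply sumL_ext; intros m. rewrite Rmult_comm, <- sumL_scal. apply sumL_ext; intros k. ring.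
Qed.

Lemma sumL_avgMK {A} c (l : list A) (f : A -> nat -> nat -> R) :
  sumL l (fun a => avgMK c (f a)) = avgMK c (fun m k => sumL l (fun a => f a m k)).
Proof.
  unfold avgMK. rewrite sumL_scal. f_equal.
  rewrite sumL_swap. apply sumL_ext; intros m. apply sumL_swap.
Qed.

Section CodeDistributions.
Variable p : R.
Hypothesis Hp : 0 < p < 1.
Variable n : nat.
Variable c : Code.
Hypothesis Hkernel : enc_kernel n c.
Hypothesis HM : (1 <= cM c)%nat.
Hypothesis HK : (1 <= cK c)%nat.

Lemma enc_total_mass m k : (m < cM c)%nat -> (k < cK c)%nat ->
  sumL (allseq n) (fun s => PSn p s * sumL (allseq n) (cenc c m k s)) = 1.
Proof.
  intros Hm Hk. rewrite <- (PSn_sum p n). apply sumL_ext_in; intros s Hs.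
  destruct Hkernel as [_ Hsum]. rewrite Hsum by assumption. ring.
Qed.

Lemma sumL_PZhat_mul (w : list bool -> R) :
  sumL (allseq n) (fun z => w z * PZhat n p c z) =
  avgMK c (fun m k => sumL (allseq n) (fun s => PSn p s *
     sumL (allseq n) (fun x => cenc c m k s x * w (xorseq x s)))).
Proof.
  unfold PZhat. rewrite (sumL_ext _ _ (fun z => avgMK c (fun m k => sumL (allseq n) (fun s =>
    sumL (allseq n) (fun x => PSn p s * cenc c m k s x *
      (if listb_eqb (xorseq x s) z then w z else 0)))))).
  - rewrite sumL_avgMK. apply avgMK_ext_in; intros m k _ _.
    rewrite sumL_swap. apply sumL_ext_in; intros s Hs.
    rewrite sumL_swap, <- sumL_scal. apply sumL_ext_in; intros x Hx.
    rewrite (sumL_ext _ _ (fun z => PSn p s * cenc c m k s x *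
      (if listb_eqb z (xorseq x s) then w z else 0))) by (intros z; now rewrite listb_eqb_sym).
    rewrite sumL_scal, sumL_indicator by (apply NoDup_allseq || now apply xorseq_allseq).
    ring.
  - intros z. rewrite avgMK_scal. apply avgMK_ext_in; intros m k _ _.
    rewrite <- sumL_scal. apply sumL_ext; intros s. rewrite <- !sumL_scal.
    apply sumL_ext; intros x. destruct (listb_eqb _ _); ring.
Qed.

Lemma PZhat_sum : sumL (allseq n) (PZhat n p c) = 1.
Proof.
  rewrite (sumL_ext _ _ (fun z => 1 * PZhat n p c z)) by (intros; ring).
  rewrite sumL_PZhat_mul. transitivity (avgMK c (fun _ _ => 1)); [|now apply avgMK_const].
  apply avgMK_ext_in; intros m k Hm Hk. etransitivity; [|apply (enc_total_mass m k Hm Hk)].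
  apply sumL_ext; intros s. now rewrite (sumL_ext _ _ (cenc c m k s)) by (intros; ring).
Qed.

Lemma PZhat_nonneg z : 0 <= PZhat n p c z.
Proof.
  unfold PZhat, avgMK. apply Rmult_le_pos.
  - left; apply Rinv_0_lt_compat, Rmult_lt_0_compat; apply lt_0_INR; lia.
  - repeat (apply sumL_nonneg; intros ? _).
    apply Rmult_le_pos; [left; now apply PSn_pos|].
    apply sumL_nonneg; intros ? _. apply Rmult_le_pos; [apply Hkernel|].
    destruct (listb_eqb _ _); lra.
Qed.

(** Gibbs' inequality, from [ln u <= u - 1] at [u = mu Q / P]. *)
Lemma KLn_ge_variational (mu : list bool -> R) : (forall z, 0 < mu z) ->
  sumL (allseq n) (fun z => PZhat n p c z * (1 + ln (mu z)))
  - sumL (allseq n) (fun z => mu z * PSn p z) <= KLn n p c * ln 2.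
Proof.
  intros Hmu. unfold KLn, Q0n. rewrite <- sumL_scalr, <- sumL_minus. apply sumL_le.
  intros z _. pose proof (PSn_pos p Hp z). pose proof (Hmu z). pose proof (PZhat_nonneg z).
  pose proof ln2_pos. set (P := PZhat n p c z) in *. set (Q := PSn p z) in *. set (u := mu z) in *.
  destruct (Rlt_le_dec 0 P) as [HP|HP].
  - assert (Hr : 0 < u * Q / P) by (apply Rdiv_lt_0_compat; nra).
    pose proof (ln_le_sub_1 _ Hr) as Hl.
    unfold log2. rewrite ln_div, ln_mult in Hl by nra. rewrite ln_div by nra.
    replace (P * ((ln P - ln Q) / ln 2) * ln 2) with (P * (ln P - ln Q)) by (field; lra).
    assert (P * (u * Q / P - 1) = u * Q - P) by (field; lra). nra.
  - replace P with 0 by lra. nra.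
Qed.

Lemma KLn_nonneg : 0 <= KLn n p c.
Proof.
  pose proof (KLn_ge_variational (fun _ => 1) (fun _ => Rlt_0_1)) as H. cbv beta in H.
  rewrite ln_1, (sumL_ext _ (fun z => PZhat n p c z * (1 + 0)) (PZhat n p c)),
    (sumL_ext _ (fun z => 1 * PSn p z) (PSn p)) in H by (intros; ring).
  rewrite PZhat_sum, PSn_sum in H by assumption. pose proof ln2_pos. nra.
Qed.

Lemma KLn_le_log2 L : 1 <= L ->
  (forall z, In z (allseq n) -> PZhat n p c z <= L * PSn p z) -> KLn n p c <= log2 L.
Proof.
  intros HL H. unfold KLn, Q0n.
  apply Rle_trans with (sumL (allseq n) (fun z => PZhat n p c z * log2 L)).
  - apply sumL_le; intros z Hz. pose proof (PSn_pos p Hp z). pose proof (PZhat_nonneg z).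
    assert (0 <= log2 L) by (unfold log2, Rdiv; apply Rmult_le_pos;
      [rewrite <- ln_1; apply ln_le; lra | left; apply Rinv_0_lt_compat, ln2_pos]).
    destruct (Rlt_le_dec 0 (PZhat n p c z)); [|nra].
    apply Rmult_le_compat_l; [lra|]. apply log2_le; [now apply Rdiv_lt_0_compat|].
    apply Rmult_le_reg_r with (PSn p z); auto. unfold Rdiv.
    rewrite Rmult_assoc, Rinv_l; [specialize (H z Hz); lra | lra].
  - rewrite sumL_scalr, PZhat_sum. lra.
Qed.

(** Take [mu = 1 + 1_B / beta] in Gibbs' inequality. *)
Lemma PZhat_event_le_KLn (B : list bool -> bool) beta : 0 < beta ->
  sumL (allseq n) (fun z => if B z then PSn p z else 0) <= beta ->
  sumL (allseq n) (fun z => if B z then PZhat n p c z else 0) * ln (/ beta) <= KLn n p c * ln 2 + 1.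
Proof.
  intros Hb HB. set (mu z := if B z then 1 + / beta else 1).
  assert (Hmu : forall z, 0 < mu z)
    by (intros z; unfold mu; destruct (B z); [pose proof (Rinv_0_lt_compat _ Hb)|]; lra).
  pose proof (KLn_ge_variational mu Hmu) as HL.
  assert (H1 : sumL (allseq n) (fun z => mu z * PSn p z) <= 2).
  { rewrite (sumL_ext _ _ (fun z => PSn p z + / beta * (if B z then PSn p z else 0)))
      by (intros z; unfold mu; destruct (B z); ring).
    rewrite sumL_plus, sumL_scal, PSn_sum by assumption.
    apply Rmult_le_compat_l with (r := / beta) in HB; [|left; now apply Rinv_0_lt_compat].
    rewrite Rinv_l in HB; lra. }
  assert (H2 : sumL (allseq n) (PZhat n p c)
                 + ln (/ beta) * sumL (allseq n) (fun z => if B z then PZhat n p c z else 0)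
               <= sumL (allseq n) (fun z => PZhat n p c z * (1 + ln (mu z)))).
  { rewrite <- sumL_scal, <- sumL_plus. apply sumL_le; intros z _.
    pose proof (PZhat_nonneg z). unfold mu. destruct (B z).
    - assert (ln (/ beta) <= ln (1 + / beta))
        by (apply ln_le; pose proof (Rinv_0_lt_compat _ Hb); lra). nra.
    - rewrite ln_1. lra. }
  rewrite PZhat_sum in H2. lra.
Qed.

End CodeDistributions.

Definition admissible (is_causal : bool) (n : nat) (R0 RK : R) (c : Code) : Prop :=
  enc_kernel n c /\ code_sizes n R0 RK c /\ (if is_causal then causal n c else True).

Lemma admissible_noncausal n R0 RK c : admissible true n R0 RK c -> admissible false n R0 RK c.
Proof. intros (Hk & Hs & _). exact (conj Hk (conj Hs I)). Qed.

Lemma achievable_noncausal p RK R0 : achievable true p RK R0 -> achievable false p RK R0.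
Proof.
  intros [HR0 [codes [Hadm Hlim]]]. split; [exact HR0|].
  exists codes. split; [intros n; exact (admissible_noncausal _ _ _ _ (Hadm n)) | exact Hlim].
Qed.

(** * Achievability *)

Section BucketCode.
Variable p : R.
Hypothesis Hp : 0 < p < 1.
Variable n : nat.
Variable dec : list bool -> nat.
Variable M : nat.

Definition bucket_mass (m : nat) : R :=
  sumL (allseq n) (fun y => if Nat.eqb (dec y) m then PSn p y else 0).

(** [P_S] conditioned on the bucket [dec = m]; an empty bucket falls back to [P_S]. *)
Definition bucket_law (m : nat) (y : list bool) : R :=
  if Rlt_dec 0 (bucket_mass m)
  then if Nat.eqb (dec y) m then PSn p y / bucket_mass m else 0
  else PSn p y.

(** The encoder draws the channel output [y] from [bucket_law m] and sends [x = y xor s]. *)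
Definition bucket_code : Code :=
  mkCode M 1 (fun m _ s x => bucket_law m (xorseq x s)) (fun y _ => dec y).

Lemma bucket_law_nonneg m y : 0 <= bucket_law m y.
Proof.
  unfold bucket_law. pose proof (PSn_pos p Hp y).
  destruct (Rlt_dec 0 (bucket_mass m)); [destruct (Nat.eqb _ _)|]; try lra.
  left; now apply Rdiv_lt_0_compat.
Qed.

Lemma bucket_law_sum m : sumL (allseq n) (bucket_law m) = 1.
Proof.
  unfold bucket_law. destruct (Rlt_dec 0 (bucket_mass m)); [|now apply PSn_sum].
  rewrite (sumL_ext _ _ (fun y => / bucket_mass m * (if Nat.eqb (dec y) m then PSn p y else 0)))
    by (intros y; destruct (Nat.eqb _ _); unfold Rdiv; ring).
  rewrite sumL_scal. fold (bucket_mass m). field. lra.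
Qed.

Lemma bucket_code_kernel : enc_kernel n bucket_code.
Proof.
  split; [intros; apply bucket_law_nonneg|].
  intros m k s _ _ Hs%In_allseq. cbn [cenc bucket_code].
  rewrite (sumL_allseq_xorseq n s (bucket_law m)) by exact Hs. apply bucket_law_sum.
Qed.

(** The law of [firstn i x] is that of [firstn i y xor firstn i s], which only sees [firstn i s]. *)
Lemma bucket_code_causal : causal n bucket_code.
Proof.
  intros m k s s' i xp Hs Hs' Hfirst. cbn [cenc bucket_code].
  set (g y := if listb_eqb (xorseq (firstn i y) (firstn i s)) xp then bucket_law m y else 0).
  assert (Hg : forall s0, In s0 (allseq n) -> firstn i s0 = firstn i s ->
    sumL (allseq n) (fun x => if listb_eqb (firstn i x) xp then bucket_law m (xorseq x s0) else 0)
    = sumL (allseq n) g).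
  { intros s0 Hs0 Hfirst0. apply In_allseq in Hs0.
    rewrite <- (sumL_allseq_xorseq n s0 g Hs0). apply sumL_ext_in; intros x Hx%In_allseq.
    unfold g. rewrite <- Hfirst0, <- firstn_xorseq, xorseqK by congruence. reflexivity. }
  now rewrite (Hg s), (Hg s').
Qed.

Lemma bucket_code_Perr : (forall m, (m < M)%nat -> 0 < bucket_mass m) -> Perr n p bucket_code = 0.
Proof.
  intros Hmass. unfold Perr, avgMK. cbn [cM cK bucket_code].
  rewrite (sumL_zero (seq 0 M)); [ring|]. intros m Hm%in_seq.
  apply sumL_zero; intros k _. apply sumL_zero; intros s _.
  rewrite (sumL_zero (allseq n)); [ring|]. intros x _. cbn [cenc cdec bucket_code].
  unfold bucket_law. destruct (Rlt_dec 0 (bucket_mass m)) as [_|Hnot];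
    [|exfalso; apply Hnot, Hmass; lia].
  destruct (Nat.eqb (dec (xorseq x s)) m); ring.
Qed.

Lemma PZhat_bucket_code z : In z (allseq n) ->
  PZhat n p bucket_code z = avgMK bucket_code (fun m _ => bucket_law m z).
Proof.
  intros Hz. apply avgMK_ext_in; intros m k _ _. cbn [cenc bucket_code].
  transitivity (sumL (allseq n) (fun s => PSn p s * bucket_law m z));
    [|now rewrite sumL_scalr, PSn_sum, Rmult_1_l].
  apply sumL_ext_in; intros s Hs%In_allseq. f_equal.
  rewrite (sumL_allseq_xorseq n s (fun y => bucket_law m y * (if listb_eqb y z then 1 else 0))) by exact Hs.
  rewrite (sumL_ext _ _ (fun y => if listb_eqb y z then bucket_law m y else 0))
    by (intros y; destruct (listb_eqb y z); ring).
  apply sumL_indicator; [apply NoDup_allseq | exact Hz].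
Qed.

Lemma PZhat_bucket_code_le a : 0 < a -> (1 <= M)%nat ->
  (forall m, (m < M)%nat -> a <= bucket_mass m) ->
  forall z, In z (allseq n) -> PZhat n p bucket_code z <= / (INR M * a) * PSn p z.
Proof.
  intros Ha HM Hmass z Hz. rewrite PZhat_bucket_code by exact Hz.
  unfold avgMK. cbn [cM cK bucket_code seq]. rewrite Rmult_1_r.
  assert (HM' : 0 < INR M) by (apply lt_0_INR; lia). pose proof (PSn_pos p Hp z).
  rewrite (sumL_ext _ _ (fun m => bucket_law m z)) by (intros; cbn; ring).
  apply Rle_trans with (/ INR M * (PSn p z / a)); [|right; field; lra].
  apply Rmult_le_compat_l; [left; now apply Rinv_0_lt_compat|].
  apply Rle_trans with (sumL (seq 0 M) (fun m => if Nat.eqb (dec z) m then PSn p z / a else 0)).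
  - apply sumL_le; intros m Hm%in_seq. specialize (Hmass m ltac:(lia)).
    unfold bucket_law. destruct (Rlt_dec 0 (bucket_mass m)); [|lra].
    destruct (Nat.eqb (dec z) m); [|lra].
    unfold Rdiv. apply Rmult_le_compat_l; [lra|]. apply Rinv_le_contravar; lra.
  - apply sumL_seq_indicator_le. left; now apply Rdiv_lt_0_compat.
Qed.

End BucketCode.

Lemma prefix_mass_between {A} (f : A -> R) tau l a : 0 < a -> (forall y, 0 <= f y <= tau) ->
  a <= sumL l f -> exists l1 l2, l = l1 ++ l2 /\ a <= sumL l1 f <= a + tau.
Proof.
  intros Ha Hf. revert a Ha; induction l as [|y l IH]; intros a Ha Hl; [cbn in Hl; lra|].
  rewrite sumL_cons in Hl. destruct (Rle_lt_dec a (f y)).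
  - exists [y], l. split; [reflexivity|]. cbn. specialize (Hf y). lra.
  - destruct (IH (a - f y)) as [l1 [l2 [-> Hl1]]]; [lra | lra|].
    exists (y :: l1), l2. split; [reflexivity|]. rewrite sumL_cons. lra.
Qed.

(** Cutting a list into consecutive blocks of [f]-mass at least [a] (each exceeding [a] by at
    most [tau]) yields [M] buckets as soon as the total mass is at least [M (a + tau)]. *)
Lemma greedy_partition (f : list bool -> R) tau a : 0 < a -> (forall y, 0 <= f y <= tau) ->
  forall M l, NoDup l -> INR M * (a + tau) <= sumL l f ->
  exists dec : list bool -> nat, forall m, (m < M)%nat ->
    a <= sumL l (fun y => if Nat.eqb (dec y) m then f y else 0).
Proof.
  intros Ha Hf. induction M as [|M IH]; intros l Hl Hmass; [exists (fun _ => O); lia|].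
  assert (Htau : 0 <= tau) by (destruct (Hf []); lra). pose proof (pos_INR M).
  rewrite S_INR in Hmass.
  destruct (prefix_mass_between f tau l a Ha Hf) as [l1 [l2 [-> Hl1]]]; [nra|].
  rewrite sumL_app in Hmass. apply NoDup_app_remove_l in Hl as Hl2.
  destruct (IH l2 Hl2) as [dec2 Hdec2]; [lra|].
  set (in_l1 y := if in_dec (list_eq_dec bool_dec) y l1 then true else false).
  exists (fun y => if in_l1 y then O else S (dec2 y)). intros [|m] Hm; rewrite sumL_app.
  - rewrite (sumL_ext_in l1 _ f) by (intros y Hy; unfold in_l1; now destruct (in_dec _ y l1)).
    enough (0 <= sumL l2 (fun y => if Nat.eqb (if in_l1 y then O else S (dec2 y)) 0 then f y else 0))
      by lra.
    apply sumL_nonneg; intros y _. destruct (Nat.eqb _ _); [apply Hf | lra].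
  - rewrite (sumL_zero l1) by (intros y Hy; unfold in_l1; now destruct (in_dec _ y l1)).
    rewrite Rplus_0_l. eapply Rle_trans; [apply (Hdec2 m); lia|]. right.
    apply sumL_ext_in; intros y Hy. unfold in_l1. destruct (in_dec _ y l1) as [Hy1|]; [|reflexivity].
    exfalso. destruct (in_split _ _ Hy) as [u [v ->]]. rewrite app_assoc in Hl.
    apply (NoDup_remove_2 _ _ _ Hl). apply in_or_app; left; apply in_or_app; now left.
Qed.

Lemma bucket_code_admissible p n dec M R0 RK : 0 < p < 1 -> 0 <= RK -> (1 <= M)%nat ->
  Rpower 2 (INR n * R0) <= INR M -> admissible true n R0 RK (bucket_code p n dec M).
Proof.
  intros Hp HRK HM HR0. split; [now apply bucket_code_kernel|].
  split; [|now apply bucket_code_causal].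
  repeat split; cbn [cM cK bucket_code]; try lia; auto.
  apply Rpower2_ge_1, Rmult_le_pos; [apply pos_INR | exact HRK].
Qed.

Section Achievability.
Variables p R0 R1 RK : R.
Hypothesis Hp : 0 < p < 1.
Hypothesis HRK : 0 <= RK.
Hypothesis HR : 0 <= R0 < R1.
Hypothesis HR1 : R1 < Hb p.

(** Buckets are filled with sequences of probability at most [2^(-n R1)]; [coding_slack n]
    bounds the [P_S]-mass lost to the atypical sequences plus the rounding loss of the
    greedy partition into [2^(n R0)] buckets. *)
Definition coding_slack (n : nat) : R :=
  aep_const p (Hb p - R1) / INR n + 2 * Rpower 2 (- (INR n * (R1 - R0))).

Lemma message_count_exists n :
  exists M, (1 <= M)%nat /\ Rpower 2 (INR n * R0) <= INR M <= 2 * Rpower 2 (INR n * R0).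
Proof.
  destruct (nat_ceil (Rpower 2 (INR n * R0))) as [M [HM1 HM2]]; [left; apply Rpower2_pos|].
  assert (1 <= Rpower 2 (INR n * R0)) by (apply Rpower2_ge_1, Rmult_le_pos; [apply pos_INR | lra]).
  exists M. split; [apply INR_le; cbn|]; lra.
Qed.

Lemma typical_buckets_exist n M : (0 < n)%nat -> (1 <= M)%nat ->
  INR M <= 2 * Rpower 2 (INR n * R0) -> coding_slack n < 1 ->
  exists dec a, 0 < a /\ 1 - coding_slack n <= INR M * a <= 1 /\
                forall m, (m < M)%nat -> a <= bucket_mass p n dec m.
Proof.
  intros Hn HM HM2 Hslack. pose proof (lt_0_INR _ Hn) as Hn'.
  assert (HMpos : 0 < INR M) by (apply lt_0_INR; lia).
  set (tau := Rpower 2 (- (INR n * R1))). assert (Htau : 0 < tau) by apply Rpower2_pos.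
  set (f y := if Rle_dec (PSn p y) tau then PSn p y else 0).
  set (g := sumL (allseq n) (fun y => if (if Rle_dec (PSn p y) tau then false else true)
                                      then PSn p y else 0)).
  assert (Hg : g <= aep_const p (Hb p - R1) / INR n).
  { apply PSn_atypical_le; [exact Hp | exact Hn | lra|]. intros y Hy Hlarge.
    destruct (Rle_dec (PSn p y) tau) as [|Hgt%Rnot_le_lt]; [discriminate|].
    apply log2_increasing in Hgt; [|exact Htau]. unfold tau in Hgt.
    rewrite log2_Rpower2 in Hgt. rewrite Rabs_pos_eq; nra. }
  assert (Hg0 : 0 <= g)
    by (apply sumL_nonneg; intros y _; pose proof (PSn_pos p Hp y); destruct (Rle_dec _ _); lra).
  assert (Hf_sum : sumL (allseq n) f = 1 - g).
  { unfold g, f. rewrite <- (PSn_sum p n), <- sumL_minus.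
    apply sumL_ext; intros y. destruct (Rle_dec _ _); ring. }
  assert (HMtau : INR M * tau <= 2 * Rpower 2 (- (INR n * (R1 - R0)))).
  { apply Rle_trans with (2 * Rpower 2 (INR n * R0) * tau); [apply Rmult_le_compat_r; lra|].
    unfold tau. rewrite Rmult_assoc, <- Rpower_plus. right. f_equal. f_equal. ring. }
  set (a := (1 - g) / INR M - tau).
  assert (HMa : INR M * a = 1 - g - INR M * tau) by (unfold a; field; lra).
  assert (Ha : 0 < a) by (unfold coding_slack in Hslack; nra).
  destruct (greedy_partition f tau a Ha) with (M := M) (l := allseq n) as [dec Hdec].
  { intros y; unfold f. pose proof (PSn_pos p Hp y). destruct (Rle_dec _ _); lra. }
  { apply NoDup_allseq. }
  { rewrite Hf_sum. right. unfold a. field. lra. }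
  exists dec, a. split; [exact Ha|]. split; [unfold coding_slack; nra|].
  intros m Hm. eapply Rle_trans; [apply (Hdec m Hm)|]. apply sumL_le; intros y _.
  unfold f. destruct (Nat.eqb _ _); [destruct (Rle_dec _ _)|]; lra.
Qed.

Lemma good_code_exists n : (0 < n)%nat -> coding_slack n < 1 ->
  exists c, admissible true n R0 RK c /\ Perr n p c = 0 /\
            KLn n p c <= log2 (/ (1 - coding_slack n)).
Proof.
  intros Hn Hslack. destruct (message_count_exists n) as (M & HM & HM1 & HM2).
  destruct (typical_buckets_exist n M Hn HM HM2 Hslack) as (dec & a & Ha & HMa & Hmass).
  assert (HMpos : 0 < INR M) by (apply lt_0_INR; lia).
  pose proof (bucket_code_admissible p n dec M R0 RK Hp HRK HM HM1) as Hadm.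
  exists (bucket_code p n dec M). split; [exact Hadm|]. split.
  - apply bucket_code_Perr. intros m Hm. specialize (Hmass m Hm). lra.
  - apply Rle_trans with (log2 (/ (INR M * a))).
    + apply (KLn_le_log2 p Hp n _ (proj1 Hadm)); cbn [cM cK bucket_code]; try lia.
      * rewrite <- Rinv_1 at 1. apply Rinv_le_contravar; nra.
      * now apply PZhat_bucket_code_le.
    + apply log2_le; [apply Rinv_0_lt_compat; nra | apply Rinv_le_contravar; lra].
Qed.

Lemma admissible_code_exists n : exists c, admissible true n R0 RK c /\
  ((0 < n)%nat -> coding_slack n < 1 ->
   Perr n p c = 0 /\ KLn n p c <= log2 (/ (1 - coding_slack n))).
Proof.
  destruct (lt_dec 0 n) as [Hn|Hn]; [destruct (Rlt_dec (coding_slack n) 1) as [Hs|Hs]|].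
  1: destruct (good_code_exists n Hn Hs) as [c Hc]; exists c; tauto.
  all: destruct (message_count_exists n) as (M & HM & HM1 & _).
  all: exists (bucket_code p n (fun _ => O) M).
  all: split; [now apply bucket_code_admissible | tauto].
Qed.

Lemma coding_slack_bounds n : (0 < n)%nat ->
  0 <= coding_slack n <= (aep_const p (Hb p - R1) + 2 / ((R1 - R0) * ln 2)) / INR n.
Proof.
  intros Hn%lt_0_INR. pose proof ln2_pos. pose proof (aep_const_nonneg p Hp (Hb p - R1)).
  assert (0 <= aep_const p (Hb p - R1) / INR n)
    by (unfold Rdiv; apply Rmult_le_pos; [lra | left; now apply Rinv_0_lt_compat]).
  pose proof (Rpower2_pos (- (INR n * (R1 - R0)))).
  assert (Hexp : Rpower 2 (- (INR n * (R1 - R0))) <= / (INR n * (R1 - R0) * ln 2))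
    by (apply Rpower2_neg_le_inv; nra).
  unfold coding_slack. split; [lra|].
  replace ((aep_const p (Hb p - R1) + 2 / ((R1 - R0) * ln 2)) / INR n)
    with (aep_const p (Hb p - R1) / INR n + 2 * / (INR n * (R1 - R0) * ln 2)) by (field; lra).
  lra.
Qed.

Definition chosen_code (n : nat) : Code :=
  proj1_sig (constructive_indefinite_description _ (admissible_code_exists n)).

Lemma chosen_code_spec n : admissible true n R0 RK (chosen_code n) /\
  ((0 < n)%nat -> coding_slack n < 1 ->
   Perr n p (chosen_code n) = 0 /\ KLn n p (chosen_code n) <= log2 (/ (1 - coding_slack n))).
Proof. unfold chosen_code. now destruct (constructive_indefinite_description _ _). Qed.

Lemma chosen_code_eventually_good eps : 0 < eps -> exists N, forall n, (N <= n)%nat ->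
  Perr n p (chosen_code n) = 0 /\ 0 <= KLn n p (chosen_code n) < eps.
Proof.
  intros Heps. pose proof ln2_pos.
  set (K := aep_const p (Hb p - R1) + 2 / ((R1 - R0) * ln 2)).
  destruct (eventually_inv_INR_lt K (Rmin (1 / 2) (eps * ln 2 / 2))) as [N HN];
    [apply Rmin_pos; [lra | apply Rdiv_lt_0_compat; nra]|].
  exists N. intros n Hn. destruct (HN n Hn) as [Hn' HKn].
  assert (Hn0 : (0 < n)%nat) by (apply INR_lt; cbn; lra).
  pose proof (coding_slack_bounds n Hn0) as Hslack. fold K in Hslack.
  pose proof (Rmin_l (1 / 2) (eps * ln 2 / 2)). pose proof (Rmin_r (1 / 2) (eps * ln 2 / 2)).
  destruct (chosen_code_spec n) as [(Hk & (HK & _ & HM & _) & _) Hgood].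
  destruct (Hgood Hn0) as [HPerr HKL]; [lra|].
  split; [exact HPerr|]. split; [now apply KLn_nonneg|].
  eapply Rle_lt_trans; [exact HKL|]. eapply Rle_lt_trans; [apply log2_inv_1_sub_le; lra|].
  apply Rmult_lt_reg_r with (ln 2); [lra|]. unfold Rdiv. rewrite Rmult_assoc, Rinv_l; lra.
Qed.

Theorem achievable_of_lt : achievable true p RK R0.
Proof.
  split; [lra|]. exists chosen_code. split; [intros n; apply chosen_code_spec|].
  split; intros eps Heps; destruct (chosen_code_eventually_good eps Heps) as [N HN];
    exists N; intros n Hn; destruct (HN n Hn) as [HPerr HKL]; unfold R_dist; rewrite Rminus_0_r.
  - rewrite HPerr, Rabs_R0. exact Heps.
  - rewrite Rabs_pos_eq; apply HKL.
Qed.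

End Achievability.

(** * Converse *)

Section Converse.
Variable p : R.
Hypothesis Hp : 0 < p < 1.
Variable n : nat.
Variable c : Code.
Hypothesis Hkernel : enc_kernel n c.
Hypothesis HM : (1 <= cM c)%nat.
Hypothesis HK : (1 <= cK c)%nat.
Variable A : list bool -> bool.

Definition success_prob (m k : nat) : R :=
  sumL (allseq n) (fun s => PSn p s * sumL (allseq n) (fun x => cenc c m k s x *
    (if Nat.eqb (cdec c (xorseq x s) k) m then 1 else 0))).

Definition decoded_in_A (m k : nat) : R :=
  sumL (allseq n) (fun y => if A y && Nat.eqb (cdec c y k) m then 1 else 0).

Lemma Perr_success_prob : Perr n p c = 1 - avgMK c success_prob.
Proof.
  transitivity (avgMK c (fun _ _ => 1) - avgMK c success_prob); [|now rewrite avgMK_const].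
  unfold Perr. rewrite <- avgMK_minus. apply avgMK_ext_in; intros m k Hm Hk.
  transitivity (sumL (allseq n) (fun s => PSn p s * sumL (allseq n) (cenc c m k s))
                - success_prob m k); [|now rewrite enc_total_mass].
  unfold success_prob. rewrite <- sumL_minus. apply sumL_ext; intros s.
  rewrite <- Rmult_minus_distr_l, <- sumL_minus. f_equal. apply sumL_ext; intros x.
  destruct (Nat.eqb _ _); ring.
Qed.

(** A message is decoded correctly either from an output in [A] (and there are only so many
    of those per message) or from an output outside [A]. *)
Lemma success_prob_le m k : (m < cM c)%nat -> (k < cK c)%nat ->
  success_prob m k <= decoded_in_A m k + sumL (allseq n) (fun s => PSn p s *
    sumL (allseq n) (fun x => cenc c m k s x * (if A (xorseq x s) then 0 else 1))).
Proof.
  intros Hm Hk.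
  replace (decoded_in_A m k) with (decoded_in_A m k *
    sumL (allseq n) (fun s => PSn p s * sumL (allseq n) (cenc c m k s)))
    by (rewrite (enc_total_mass p n c Hkernel m k Hm Hk); ring).
  rewrite <- sumL_scal, <- sumL_plus. apply sumL_le; intros s Hs.
  rewrite <- Rmult_assoc, (Rmult_comm (decoded_in_A m k)), Rmult_assoc, <- Rmult_plus_distr_l.
  apply Rmult_le_compat_l; [left; now apply PSn_pos|].
  rewrite <- sumL_scal, <- sumL_plus. apply sumL_le; intros x Hx.
  set (y := xorseq x s). assert (Hy : In y (allseq n)) by now apply xorseq_allseq.
  assert (Hterm : (if A y && Nat.eqb (cdec c y k) m then 1 else 0) <= decoded_in_A m k).
  { apply (sumL_term_le _ (fun y => if A y && Nat.eqb (cdec c y k) m then 1 else 0)); auto.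
    intros y' _. destruct (_ && _); lra. }
  assert (0 <= cenc c m k s x) by apply Hkernel.
  destruct (A y), (Nat.eqb (cdec c y k) m); cbn [andb] in Hterm; nra.
Qed.

Lemma avgMK_decoded_in_A_le :
  avgMK c decoded_in_A <= sumL (allseq n) (fun y => if A y then 1 else 0) / INR (cM c).
Proof.
  assert (HMr : 0 < INR (cM c)) by (apply lt_0_INR; lia).
  assert (HKr : 0 < INR (cK c)) by (apply lt_0_INR; lia).
  unfold avgMK, decoded_in_A. rewrite sumL_swap.
  apply Rle_trans with
    (/ (INR (cM c) * INR (cK c)) * sumL (seq 0 (cK c)) (fun _ => sumL (allseq n) (fun y => if A y then 1 else 0))).
  - apply Rmult_le_compat_l; [left; apply Rinv_0_lt_compat; nra|].
    apply sumL_le; intros k _. rewrite sumL_swap. apply sumL_le; intros y _.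
    destruct (A y); cbn [andb]; [apply sumL_seq_indicator_le; lra|].
    rewrite sumL_zero; [lra | reflexivity].
  - rewrite sumL_const, length_seq. right. field. lra.
Qed.

Lemma correct_decoding_le :
  1 - Perr n p c <= sumL (allseq n) (fun y => if A y then 1 else 0) / INR (cM c)
                    + sumL (allseq n) (fun z => if A z then 0 else PZhat n p c z).
Proof.
  rewrite (sumL_ext _ (fun z => if A z then 0 else PZhat n p c z)
             (fun z => (if A z then 0 else 1) * PZhat n p c z)) by (intros z; destruct (A z); ring).
  rewrite sumL_PZhat_mul, Perr_success_prob by assumption.
  pose proof avgMK_decoded_in_A_le.
  enough (avgMK c success_prob <= avgMK c decoded_in_A + avgMK c (fun m k => sumL (allseq n)
    (fun s => PSn p s * sumL (allseq n) (fun x => cenc c m k s x * (if A (xorseq x s) then 0 else 1)))))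
    by lra.
  rewrite <- avgMK_plus. apply avgMK_le; auto. exact success_prob_le.
Qed.

End Converse.

Definition likely (p : R) (n : nat) (delta : R) (y : list bool) : bool :=
  if Rle_dec (Rpower 2 (- (INR n * (Hb p + delta)))) (PSn p y) then true else false.

Lemma likely_count_div_le p n delta R0 M : 0 < p < 1 -> 0 < delta -> Hb p + 2 * delta <= R0 ->
  (0 < n)%nat -> Rpower 2 (INR n * R0) <= INR M ->
  sumL (allseq n) (fun y => if likely p n delta y then 1 else 0) / INR M <= / (INR n * delta * ln 2).
Proof.
  intros Hp Hd HR0 Hn%lt_0_INR HM. pose proof ln2_pos.
  set (E := Rpower 2 (INR n * (Hb p + delta))).
  apply Rle_trans with (E / Rpower 2 (INR n * R0)).
  - unfold Rdiv. apply Rmult_le_compat.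
    + apply sumL_nonneg; intros y _. destruct (likely p n delta y); lra.
    + left; apply Rinv_0_lt_compat. pose proof (Rpower2_pos (INR n * R0)). lra.
    + rewrite (sumL_ext _ _ (fun y => if Rle_dec (/ E) (PSn p y) then 1 else 0))
        by (intros y; unfold likely, E; rewrite Rpower_Ropp; now destruct (Rle_dec _ _)).
      eapply Rle_trans; [apply count_PSn_ge_le; [exact Hp | apply Rinv_0_lt_compat, Rpower2_pos]|].
      rewrite Rinv_inv. lra.
    + apply Rinv_le_contravar; [apply Rpower2_pos | exact HM].
  - unfold E, Rdiv. rewrite <- Rpower_Ropp, <- Rpower_plus.
    eapply Rle_trans; [apply (Rpower2_le _ (- (INR n * delta))); nra|].
    apply Rpower2_neg_le_inv. nra.
Qed.

(** The unlikely outputs are rare under [P_S] by the AEP, hence under [PZhat] by Gibbs. *)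
Lemma unlikely_PZhat_le p n delta c : 0 < p < 1 -> 0 < delta -> aep_const p delta + 1 < INR n ->
  enc_kernel n c -> (1 <= cM c)%nat -> (1 <= cK c)%nat ->
  sumL (allseq n) (fun z => if likely p n delta z then 0 else PZhat n p c z)
  <= (KLn n p c * ln 2 + 1) / ln (INR n / (aep_const p delta + 1)).
Proof.
  intros Hp Hd Hn Hkernel HM HK. pose proof (aep_const_nonneg p Hp delta).
  assert (Hn0 : (0 < n)%nat) by (apply INR_lt; cbn; lra).
  set (beta := (aep_const p delta + 1) / INR n).
  assert (Hbeta : 0 < beta) by (apply Rdiv_lt_0_compat; lra).
  replace (INR n / (aep_const p delta + 1)) with (/ beta) by (unfold beta; now rewrite Rinv_div).
  assert (Hlnpos : 0 < ln (/ beta)).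
  { unfold beta. rewrite Rinv_div, <- ln_1. apply ln_increasing; [lra|].
    apply Rmult_lt_reg_r with (aep_const p delta + 1); [lra|].
    unfold Rdiv. rewrite Rmult_assoc, Rinv_l; lra. }
  assert (Hatyp : sumL (allseq n) (fun z => if negb (likely p n delta z) then PSn p z else 0) <= beta).
  { eapply Rle_trans; [apply (PSn_atypical_le p Hp n delta); auto|].
    - intros y Hy Hlow. unfold likely in Hlow.
      destruct (Rle_dec _ (PSn p y)) as [|Hlt%Rnot_le_lt]; [discriminate|].
      apply log2_increasing in Hlt; [|apply PSn_pos, Hp].
      rewrite log2_Rpower2 in Hlt. rewrite Rabs_left; nra.
    - unfold beta, Rdiv. apply Rmult_le_compat_r; [left; apply Rinv_0_lt_compat; lra | lra]. }
  pose proof (PZhat_event_le_KLn p Hp n c Hkernel HM HK _ beta Hbeta Hatyp) as HPZ.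
  rewrite (sumL_ext _ (fun z => if negb (likely p n delta z) then PZhat n p c z else 0)
    (fun z => if likely p n delta z then 0 else PZhat n p c z)) in HPZ
    by (intros z; now destruct (likely p n delta z)).
  apply Rmult_le_reg_r with (ln (/ beta)); [exact Hlnpos|].
  unfold Rdiv. rewrite Rmult_assoc, Rinv_l; lra.
Qed.

(** Finite-blocklength converse: the likely outputs decode too few of the messages, and the
    warden's output puts little mass on the others. *)
Lemma success_le_of_rate_gt p RK R0 delta n c : 0 < p < 1 -> 0 < delta -> Hb p + 2 * delta <= R0 ->
  aep_const p delta + 1 < INR n -> admissible false n R0 RK c ->
  1 - Perr n p c <= / (INR n * delta * ln 2)
                    + (KLn n p c * ln 2 + 1) / ln (INR n / (aep_const p delta + 1)).
Proof.
  intros Hp Hd HR0 Hn (Hkernel & (HK & _ & HM & HMsize) & _).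
  pose proof (aep_const_nonneg p Hp delta).
  assert (Hn0 : (0 < n)%nat) by (apply INR_lt; cbn; lra).
  pose proof (correct_decoding_le p Hp n c Hkernel HM HK (likely p n delta)).
  pose proof (likely_count_div_le p n delta R0 (cM c) Hp Hd HR0 Hn0 HMsize).
  pose proof (unlikely_PZhat_le p n delta c Hp Hd Hn Hkernel HM HK).
  lra.
Qed.

Theorem achievable_le_Hb p RK R0 : 0 < p < 1 -> achievable false p RK R0 -> R0 <= Hb p.
Proof.
  intros Hp [_ [codes [Hadm [HPerr HKL]]]].
  destruct (Rle_lt_dec R0 (Hb p)) as [|Hlt]; [assumption|exfalso].
  pose proof ln2_pos. set (delta := (R0 - Hb p) / 2). assert (Hd : 0 < delta) by (unfold delta; lra).
  set (K := aep_const p delta + 1). pose proof (aep_const_nonneg p Hp delta).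
  (* Pick [n] with [Perr < 1/4], [KL ln 2 < 1] and both terms of [success_le_of_rate_gt]
     below [1/4]. *)
  destruct (HPerr (1 / 4)) as [N1 HN1]; [lra|].
  destruct (HKL (/ ln 2)) as [N2 HN2]; [now apply Rinv_0_lt_compat|].
  destruct (eventually_inv_INR_lt (/ (delta * ln 2)) (1 / 4)) as [N3 HN3]; [lra|].
  destruct (eventually_ln_div_gt K 8) as [N4 HN4]; [unfold K; lra | lra|].
  set (n := (N1 + N2 + N3 + N4)%nat).
  specialize (HN1 n ltac:(lia)). specialize (HN2 n ltac:(lia)).
  destruct (HN3 n ltac:(lia)) as [Hn HN3']. destruct (HN4 n ltac:(lia)) as [HKn Hln].
  unfold R_dist in HN1, HN2. rewrite Rminus_0_r in HN1, HN2.
  pose proof (success_le_of_rate_gt p RK R0 delta n (codes n) Hp Hd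
                ltac:(unfold delta; lra) HKn (Hadm n)) as Hsuccess. fold K in Hsuccess.
  replace (/ (INR n * delta * ln 2)) with (/ (delta * ln 2) / INR n) in Hsuccess by (field; lra).
  apply Rabs_def2 in HN1 as [HN1 _]. apply Rabs_def2 in HN2 as [HN2 HN2'].
  assert (0 <= KLn n p (codes n) * ln 2 + 1 < 2).
  { assert (/ ln 2 * ln 2 = 1) by (field; lra). split; nra. }
  assert ((KLn n p (codes n) * ln 2 + 1) / ln (INR n / K) < 1 / 4).
  { apply Rmult_lt_reg_r with (ln (INR n / K)); [lra|].
    unfold Rdiv at 1. rewrite Rmult_assoc, Rinv_l by lra. lra. }
  lra.
Qed.

Theorem mainTheorem9 (p RK : R) :
  0 < p < 1 / 2 -> 0 < RK ->
  is_lub (achievable true p RK) (Hb p) /\ is_lub (achievable false p RK) (Hb p).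
Proof.
  intros Hp HRK. assert (Hp1 : 0 < p < 1) by lra.
  assert (Hach : forall R0, 0 <= R0 < Hb p -> achievable true p RK R0).
  { intros R0 HR0. apply (achievable_of_lt p R0 ((R0 + Hb p) / 2)); lra. }
  split; apply is_lub_of_interval; auto using Hb_pos.
  - intros R0 H. apply (achievable_le_Hb p RK); auto using achievable_noncausal.
  - intros R0 H. now apply (achievable_le_Hb p RK).
  - intros R0 HR0. now apply achievable_noncausal, Hach.
Qed.
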